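(* Let $b_1,\dots,b_k$ be positive integers and let $[c_1,\dots,c_k]$ be a permutation (rearrangement) of the list $[b_1,\dots,b_k]$. Then $\operatorname{op}_{[b_1,\dots,b_k]}(123)=\operatorname{op}_{[c_1,\dots,c_k]}(123)$.
   Context: An ordered set partition of $[N]$ into $k$ blocks is a sequence $B_1/B_2/\cdots/B_k$ of nonempty, pairwise disjoint subsets of $[N]$ whose union is $[N]$; the order of the blocks matters, but not the order of elements within a block. For a permutation $\rho=\rho_1\cdots\rho_m\in\mathcal{S}_m$, an ordered partition $B_1/\cdots/B_k$ contains $\rho$ if there are block indices $i_1<i_2<\cdots<i_m$ and elements $b_j\in B_{i_j}$ such that $b_1\cdots b_m$ is order-isomorphic to $\rho$ (i.e. $b_a<b_c$ iff $\rho_a<\rho_c$); otherwise it avoids $\rho$. For positive integers $b_1,\dots,b_k$, $\operatorname{op}_{[b_1,\dots,b_k]}(\rho)$ denotes the number of ordered partitions $B_1/\cdots/B_k$ of $[b_1+\cdots+b_k]$ with $|B_i|=b_i$ for all $i$ that avoid $\rho$. *)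

From mathcomp Require Import all_boot all_order all_fingroup.
Set Implicit Arguments. Unset Strict Implicit. Unset Printing Implicit Defensive.

(* Ground set [N] is represented by 'I_N = {0,...,N-1} (order-isomorphic to {1..N}). *)

Definition is_osp (N k : nat) (b : 'I_k -> nat) (B : {ffun 'I_k -> {set 'I_N}}) : bool :=
  [forall i, B i != set0] &&
  [forall i, forall j, (i != j) ==> [disjoint B i & B j]] &&
  (\bigcup_(i < k) B i == [set: 'I_N]) &&
  [forall i, #|B i| == b i].

Definition osp_contains (N k m : nat) (B : {ffun 'I_k -> {set 'I_N}}) (rho : 'S_m) : bool :=
  [exists ix : {ffun 'I_m -> 'I_k}, exists e : {ffun 'I_m -> 'I_N},
     [forall a : 'I_m, forall c : 'I_m, (a < c)%N ==> (ix a < ix c)%N] &&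
     [forall a : 'I_m, e a \in B (ix a)] &&
     [forall a : 'I_m, forall c : 'I_m, ((e a < e c)%N == (rho a < rho c)%N)]].

Definition op (bs : seq nat) (m : nat) (rho : 'S_m) : nat :=
  #|[pred B : {ffun 'I_(size bs) -> {set 'I_(sumn bs)}} |
      is_osp (fun i => nth 0 bs i) B && ~~ osp_contains B rho]|.

(* The pattern 123 in S_3 (0-based: the identity permutation). *)
Definition p123 : 'S_3 := 1%g.

From mathcomp Require Import all_boot all_order all_fingroup.
From mathcomp Require Import zify.
Set Implicit Arguments. Unset Strict Implicit. Unset Printing Implicit Defensive.

(* Since adjacent transpositions generate all permutations, it suffices to
   exchange the sizes of two adjacent blocks j and j+1.  Let S be the union of
   these blocks and L, R the unions of the blocks before and after them.  An
   avoiding partition has no a in B_j, b in B_(j+1) with a < b such that some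
   element of L lies below a or some element of R above b; equivalently, B_j
   is an up-set in each of two classes of S determined by L and R.  Reversing
   the order of S separately on each class maps the complement B_(j+1) of such
   an up-set to another one, so this reversal followed by the exchange of the
   two blocks is an involution between avoiding partitions with block sizes
   (.., b_j, b_(j+1), ..) and (.., b_(j+1), b_j, ..). *)

Section SetReversal.

Variables (N : nat) (C : {set 'I_N}).

Let ltn_ord := fun a b : 'I_N => a < b.

Let ltn_ord_trans : transitive ltn_ord.
Proof. by move=> b a c; apply: ltn_trans. Qed.

Lemma enum_set_ord_sorted : sorted ltn_ord (enum C).
Proof.
rewrite -deprecated_filter_index_enum.
apply: sorted_filter => //.
by have := iota_ltn_sorted 0 N; rewrite -val_enum_ord sorted_map enumT.
Qed.

Definition revset (s : 'I_N) : 'I_N :=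
  nth s (enum C) (#|C| - (index s (enum C)).+1).

Lemma index_enum_set_lt s : s \in C -> index s (enum C) < #|C|.
Proof. by move=> sC; rewrite cardE index_mem mem_enum. Qed.

Lemma revset_in s : s \in C -> revset s \in C.
Proof.
move=> sC; have := index_enum_set_lt sC.
rewrite -mem_enum /revset cardE => lt_s; apply: mem_nth.
by rewrite ltn_subrL (leq_ltn_trans _ lt_s).
Qed.

Lemma index_revset s : s \in C ->
  index (revset s) (enum C) = #|C| - (index s (enum C)).+1.
Proof.
move=> sC; have := index_enum_set_lt sC.
rewrite cardE => lt_s; rewrite /revset cardE index_uniq ?enum_uniq //.
by rewrite ltn_subrL (leq_ltn_trans _ lt_s).
Qed.

Lemma revsetK : {in C, involutive revset}.
Proof.
move=> s sC; have lt_s := index_enum_set_lt sC.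
rewrite {1}/revset index_revset //.
have -> : #|C| - (#|C| - (index s (enum C)).+1).+1 = index s (enum C) by lia.
by rewrite (set_nth_default s) ?nth_index ?mem_enum // -cardE.
Qed.

Lemma revset_ltn s t : s \in C -> t \in C -> s < t -> revset t < revset s.
Proof.
move=> sC tC lt_st.
have lt_index : index s (enum C) < index t (enum C).
  case: ltngtP => // [lt_ts|eq_st].
    have := sorted_ltn_index ltn_ord_trans enum_set_ord_sorted.
    move=> /(_ t s); rewrite !mem_enum => /(_ tC sC lt_ts).
    by move=> /(ltn_trans lt_st); rewrite ltnn.
  have /eqP := congr1 (nth s (enum C)) eq_st.
  by rewrite !nth_index ?mem_enum // => /eqP eq_ts; move: lt_st; rewrite eq_ts ltnn.
have lt_t : index t (enum C) < size (enum C) by rewrite -cardE index_enum_set_lt.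
rewrite /revset cardE (set_nth_default s t) ?ltn_subrL ?(leq_ltn_trans _ lt_t) //.
apply: (sorted_ltn_nth ltn_ord_trans s enum_set_ord_sorted);
  rewrite ?inE ?ltn_subrL ?(leq_ltn_trans _ lt_t) //.
by rewrite ltn_sub2lE.
Qed.

End SetReversal.

Definition lbounds N (L : {set 'I_N}) := [set s : 'I_N | [forall l in L, s <= l]].
Definition ubounds N (R : {set 'I_N}) := [set s : 'I_N | [forall r in R, r <= s]].

Lemma lbounds_ltn N (L : {set 'I_N}) (a b : 'I_N) :
  a < b -> b \in lbounds L -> a \in lbounds L.
Proof.
move=> lt_ab /[!inE] /forall_inP bL; apply/forall_inP => l lL.
exact: leq_trans (ltnW lt_ab) (bL l lL).
Qed.

Lemma ubounds_ltn N (R : {set 'I_N}) (a b : 'I_N) :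
  a < b -> a \in ubounds R -> b \in ubounds R.
Proof.
move=> lt_ab /[!inE] /forall_inP aR; apply/forall_inP => r rR.
exact: leq_trans (aR r rR) (ltnW lt_ab).
Qed.

Section Flip.

Variables (N : nat) (S L R : {set 'I_N}).

Definition sandwiched := [exists s in S, (s \notin lbounds L) && (s \notin ubounds R)].

(* If some element of S lies strictly between an element of L and one of R,
   the whole of S is reversed.  Otherwise the elements of S below some element
   of R and those above some element of L form two disjoint classes, each
   reversed on its own; the remaining elements of S are fixed. *)
Definition flip_class1 := if sandwiched then S else S :\: ubounds R.
Definition flip_class2 := if sandwiched then set0 else S :\: lbounds L.

Definition flip (s : 'I_N) : 'I_N :=
  if s \in flip_class1 then revset flip_class1 s
  else if s \in flip_class2 then revset flip_class2 s else s.

Lemma flip_class1_sub : flip_class1 \subset S.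
Proof. by rewrite /flip_class1; case: ifP => _ //; apply: subsetDl. Qed.

Lemma flip_class2_sub : flip_class2 \subset S.
Proof. by rewrite /flip_class2; case: ifP => _; [apply: sub0set | apply: subsetDl]. Qed.

Lemma flip_class1_notin2 s : s \in flip_class1 -> s \notin flip_class2.
Proof.
rewrite /flip_class1 /flip_class2; case: ifPn => [_|]; first by rewrite inE.
move=> nsw /setDP [sS sR]; apply/setDP => -[_ sL].
by move/existsPn: nsw => /(_ s); rewrite sS sL sR.
Qed.

Lemma flip1 s : s \in flip_class1 -> flip s = revset flip_class1 s.
Proof. by rewrite /flip => ->. Qed.

Lemma flip2 s : s \in flip_class2 -> flip s = revset flip_class2 s.
Proof.
by move=> s2; rewrite /flip s2; case: ifPn => // /flip_class1_notin2; rewrite s2.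
Qed.

Lemma flipK : involutive flip.
Proof.
move=> s; have [s1|n1] := boolP (s \in flip_class1).
  by rewrite (flip1 s1) (flip1 (revset_in s1)) revsetK.
have [s2|n2] := boolP (s \in flip_class2).
  by rewrite (flip2 s2) (flip2 (revset_in s2)) revsetK.
by rewrite /flip (negPf n1) (negPf n2) (negPf n1) (negPf n2).
Qed.

Lemma flip_out s : s \notin S -> flip s = s.
Proof.
move=> sS; rewrite /flip; case: ifPn => [/(subsetP flip_class1_sub)|_].
  by rewrite (negPf sS).
by case: ifPn => // /(subsetP flip_class2_sub); rewrite (negPf sS).
Qed.

Lemma flip_in s : s \in S -> flip s \in S.
Proof.
move=> sS; have [s1|n1] := boolP (s \in flip_class1).
  by rewrite (flip1 s1); apply: (subsetP flip_class1_sub); apply: revset_in.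
have [s2|n2] := boolP (s \in flip_class2).
  by rewrite (flip2 s2); apply: (subsetP flip_class2_sub); apply: revset_in.
by rewrite /flip (negPf n1) (negPf n2).
Qed.

Lemma imset_flipK (X : {set 'I_N}) : flip @: (flip @: X) = X.
Proof. by rewrite -imset_comp (eq_imset _ flipK) imset_id. Qed.

Lemma imset_flip_id : flip @: S = S.
Proof.
apply/setP => x; apply/imsetP/idP => [[y yS ->]|xS]; first exact: flip_in.
by exists (flip x); [apply: flip_in | rewrite flipK].
Qed.

Definition upward_closed_in (C A : {set 'I_N}) :=
  forall a b : 'I_N, a \in A -> a \in C -> b \in C -> a < b -> b \in A.

(* Putting A and S :\: A into two adjacent blocks, preceded by L and followed
   by R, creates no occurrence of 123 using both blocks. *)
Definition split_avoids (A : {set 'I_N}) :=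
  forall a b : 'I_N, a \in A -> b \in S -> b \notin A -> a < b ->
    (a \in lbounds L) && (b \in ubounds R).

Lemma split_avoidsP (A : {set 'I_N}) : A \subset S ->
  split_avoids A <-> upward_closed_in flip_class1 A /\ upward_closed_in flip_class2 A.
Proof.
move=> AS; rewrite /flip_class1 /flip_class2; split.
  move=> sA; case: ifPn => [/exists_inP [z zS /andP [zL zR]]|nsw].
    (* A sandwiched z completes an occurrence of 123 with any a in A below a
       b outside A, wherever z lies relative to a and b. *)
    split=> [a b aA aS bS lt_ab|a b _]; last by rewrite inE.
    apply/negPn/negP => bA; have /andP [aL bR] := sA a b aA bS bA lt_ab.
    have [zA|zA] := boolP (z \in A).
      case: (ltngtP z b) => [lt_zb|lt_bz|/val_inj eq_zb].
      - by have /andP [] := sA z b zA bS bA lt_zb; rewrite (negPf zL).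
      - by move: zR; rewrite (ubounds_ltn lt_bz bR).
      - by move: zR; rewrite eq_zb bR.
    case: (ltngtP a z) => [lt_az|lt_za|/val_inj eq_az].
    - by have /andP [] := sA a z aA zS zA lt_az; rewrite (negPf zR).
    - by move: zL; rewrite (lbounds_ltn lt_za aL).
    - by move: zA; rewrite -eq_az aA.
  split=> [a b aA _ /setDP [bS bR]|a b aA /setDP [_ aL] /setDP [bS _]] lt_ab;
    apply/negPn/negP => bA; have /andP [] := sA a b aA bS bA lt_ab.
  - by rewrite (negPf bR).
  - by rewrite (negPf aL).
case: ifPn => nsw [up1 up2] a b aA bS bA lt_ab.
  by move: bA; rewrite (up1 a b aA (subsetP AS _ aA) bS lt_ab).
apply/andP; split; apply/negPn/negP.
  move=> aL; have bL : b \notin lbounds L by apply: contra aL; apply: lbounds_ltn.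
  by move: bA; rewrite (up2 a b aA) // inE ?aL ?bL ?bS ?(subsetP AS _ aA).
move=> bR; have aR : a \notin ubounds R by apply: contra bR; apply: ubounds_ltn.
by move: bA; rewrite (up1 a b aA) // inE ?aR ?bR ?bS ?(subsetP AS _ aA).
Qed.

Lemma upward_closed_flip (C A : {set 'I_N}) :
  C \subset S -> {in C, flip =1 revset C} ->
  upward_closed_in C A -> upward_closed_in C (flip @: (S :\: A)).
Proof.
move=> CS flipC upA a b /imsetP [c /setDP [cS cA] ->] aC bC lt_ab.
have ec : c = revset C (flip c) by rewrite -flipC // flipK.
have cC : c \in C by rewrite ec; apply: revset_in.
apply/imsetP; exists (revset C b); last by rewrite flipC ?revsetK ?revset_in.
rewrite inE (subsetP CS _ (revset_in bC)) andbT; apply: contra cA => bA.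
apply: (upA _ _ bA (revset_in bC) cC).
by rewrite [in X in _ < X]ec revset_ltn.
Qed.

Lemma split_avoids_flip (A : {set 'I_N}) :
  A \subset S -> split_avoids A -> split_avoids (flip @: (S :\: A)).
Proof.
move=> AS /(split_avoidsP AS) [up1 up2].
have flipS : flip @: (S :\: A) \subset S.
  by rewrite -{2}imset_flip_id imsetS ?subsetDl.
by apply/(split_avoidsP flipS); split; apply: upward_closed_flip;
  rewrite ?flip_class1_sub ?flip_class2_sub //; [exact: flip1 | exact: flip2].
Qed.

End Flip.

Definition is123 k N (B : {ffun 'I_k -> {set 'I_N}}) (i1 i2 i3 : 'I_k)
    (x1 x2 x3 : 'I_N) :=
  [/\ i1 < i2 < i3, x1 \in B i1, x2 \in B i2, x3 \in B i3 & x1 < x2 < x3].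

Definition has123 k N (B : {ffun 'I_k -> {set 'I_N}}) :=
  exists i1 i2 i3 x1 x2 x3, is123 B i1 i2 i3 x1 x2 x3.

Definition disjoint_blocks k N (B : {ffun 'I_k -> {set 'I_N}}) :=
  forall i i' : 'I_k, i != i' -> [disjoint B i & B i'].

Lemma disjoint_blocksN k N (B : {ffun 'I_k -> {set 'I_N}}) i i' x :
  disjoint_blocks B -> i != i' -> x \in B i -> x \notin B i'.
Proof. by move=> dB ii' xi; rewrite (disjointFr (dB i i' ii') xi). Qed.

Section AdjacentBlocks.

Variables (k N : nat) (j j' : 'I_k).
Hypothesis adjacent : j' = j.+1 :> nat.

Let jj' : j != j'.
Proof. by apply/eqP => /(congr1 val) /=; rewrite adjacent; lia. Qed.

Implicit Types B : {ffun 'I_k -> {set 'I_N}}.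

Definition before B := \bigcup_(i : 'I_k | (i < j)%N) B i.
Definition after B := \bigcup_(i : 'I_k | (j' < i)%N) B i.
Definition flip_blocks B := flip (B j :|: B j') (before B) (after B).

Definition swap_blocks B : {ffun 'I_k -> {set 'I_N}} :=
  [ffun i => if i \in [set j; j'] then flip_blocks B @: B (tperm j j' i) else B i].

Lemma flip_blocksK B : involutive (flip_blocks B).
Proof. exact: flipK. Qed.

Lemma swap_blocks_out B i : i \notin [set j; j'] -> swap_blocks B i = B i.
Proof. by rewrite ffunE => /negPf ->. Qed.

Lemma swap_blocks_in B i : i \in [set j; j'] ->
  swap_blocks B i = flip_blocks B @: B (tperm j j' i).
Proof. by rewrite ffunE => ->. Qed.

Lemma swap_blocks_pair B : swap_blocks B j :|: swap_blocks B j' = B j :|: B j'.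
Proof.
rewrite !swap_blocks_in ?set21 ?set22 // tpermL tpermR setUC -imsetU.
exact: imset_flip_id.
Qed.

Let swap_blocks_far B (i : 'I_k) :
  (i < j)%N || (j' < i)%N -> swap_blocks B i = B i.
Proof.
move=> far; rewrite swap_blocks_out // !inE -!(inj_eq val_inj) /=.
by move: far; rewrite adjacent; lia.
Qed.

Lemma before_swap_blocks B : before (swap_blocks B) = before B.
Proof. by apply: eq_bigr => i lt_ij; rewrite swap_blocks_far ?lt_ij. Qed.

Lemma after_swap_blocks B : after (swap_blocks B) = after B.
Proof. by apply: eq_bigr => i lt_j'i; rewrite swap_blocks_far ?lt_j'i ?orbT. Qed.

Lemma flip_blocks_swap B : flip_blocks (swap_blocks B) = flip_blocks B.
Proof.
by rewrite /flip_blocks swap_blocks_pair before_swap_blocks after_swap_blocks.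
Qed.

Lemma swap_blocksK : involutive swap_blocks.
Proof.
move=> B; apply/ffunP => i; have [ip|ip] := boolP (i \in [set j; j']).
  rewrite swap_blocks_in // flip_blocks_swap swap_blocks_in ?tpermK ?imset_flipK //.
  by move: ip; rewrite !inE => /orP [] /eqP ->; rewrite ?tpermL ?tpermR eqxx ?orbT.
by rewrite !swap_blocks_out.
Qed.

Lemma mem_swap_blocks B i x : x \in swap_blocks B i ->
  exists2 i', x \in B i' & (i' == i) || (i' == tperm j j' i).
Proof.
have [ip|ip] := boolP (i \in [set j; j']); last first.
  by rewrite swap_blocks_out // => xB; exists i; rewrite ?eqxx.
have sub_pair : B (tperm j j' i) \subset B j :|: B j'.
  by move: ip; rewrite !inE => /orP [] /eqP ->;
    rewrite ?tpermL ?tpermR ?subsetUl ?subsetUr.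
rewrite swap_blocks_in // => /(subsetP (imsetS _ sub_pair)); rewrite imset_flip_id.
by case/setUP=> xB; [exists j | exists j'] => //; move: ip; rewrite !inE =>
  /orP [] /eqP ->; rewrite ?tpermL ?tpermR !eqxx ?orbT.
Qed.

Lemma ltn_swap_related (i1 i2 i1' i2' : 'I_k) :
  (i1 < i2)%N -> ~~ ((i1 == j) && (i2 == j')) ->
  (i1' == i1) || (i1' == tperm j j' i1) -> (i2' == i2) || (i2' == tperm j j' i2) ->
  (i1' < i2')%N.
Proof.
by case: tpermP => [->|->|+ +]; case: tpermP => [->|->|+ +];
  rewrite -!(inj_eq val_inj) /= ?adjacent; lia.
Qed.

Lemma no123_split_avoids B :
  ~ has123 B -> split_avoids (B j :|: B j') (before B) (after B) (B j).
Proof.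
move=> no123 a b aA /setUP [bA|bB] bnA lt_ab; first by rewrite bA in bnA.
apply/andP; split; rewrite inE; apply/forall_inP => x /bigcupP [i lt_i xB];
  rewrite leqNgt; apply/negP => lt_x; apply: no123.
- by exists i, j, j', x, a, b; split; rewrite // ?lt_i ?lt_x ?lt_ab ?adjacent ?ltnSn.
- by exists j, j', i, a, b, x; split; rewrite // ?lt_i ?lt_x ?lt_ab ?adjacent ?ltnSn.
Qed.

Lemma split_avoids_no_cross B i1 i2 i3 x1 x2 x3 :
  [disjoint B j & B j'] -> split_avoids (B j :|: B j') (before B) (after B) (B j) ->
  is123 B i1 i2 i3 x1 x2 x3 ->
  ~~ ((i1 == j) && (i2 == j')) && ~~ ((i2 == j) && (i3 == j')).
Proof.
move=> dB sA [/andP [lt12 lt23] x1B x2B x3B /andP [lt_x12 lt_x23]].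
have inS x : x \in B j' -> x \in B j :|: B j' by apply/subsetP/subsetUr.
apply/andP; split; apply/negP => /andP [/eqP e1 /eqP e2]; subst.
- have /andP [_] := sA x1 x2 x1B (inS _ x2B) (negbT (disjointFl dB x2B)) lt_x12.
  have x3R : x3 \in after B by apply/bigcupP; exists i3.
  by rewrite inE => /forall_inP /(_ x3 x3R); rewrite leqNgt lt_x23.
- have /andP [+ _] := sA x2 x3 x2B (inS _ x3B) (negbT (disjointFl dB x3B)) lt_x23.
  have x1L : x1 \in before B by apply/bigcupP; exists i1.
  by rewrite inE => /forall_inP /(_ x1 x1L); rewrite leqNgt lt_x12.
Qed.

Lemma is123_swap_blocks B i1 i2 i3 x1 x2 x3 :
  is123 (swap_blocks B) i1 i2 i3 x1 x2 x3 ->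
  ~~ ((i1 == j) && (i2 == j')) -> ~~ ((i2 == j) && (i3 == j')) -> has123 B.
Proof.
move=> [/andP [lt12 lt23] /mem_swap_blocks [i1' x1B r1] /mem_swap_blocks [i2' x2B r2]
  /mem_swap_blocks [i3' x3B r3] lt_x] c12 c23.
exists i1', i2', i3', x1, x2, x3; split => //.
by rewrite (ltn_swap_related lt12 c12 r1 r2) (ltn_swap_related lt23 c23 r2 r3).
Qed.

Lemma swap_blocks_no123 B :
  disjoint_blocks B -> ~ has123 B -> ~ has123 (swap_blocks B).
Proof.
move=> dB no123 [i1 [i2 [i3 [x1 [x2 [x3 pat]]]]]].
have swap_j : swap_blocks B j = flip_blocks B @: B j'.
  by rewrite swap_blocks_in ?set21 ?tpermL.
have swap_j' : swap_blocks B j' = flip_blocks B @: B j.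
  by rewrite swap_blocks_in ?set22 ?tpermR.
have dB' : [disjoint swap_blocks B j & swap_blocks B j'].
  rewrite swap_j swap_j' -setI_eq0 -imsetI; last first.
    by move=> x y _ _; exact: can_inj (flip_blocksK B) x y.
  by rewrite imset_eq0 setI_eq0 disjoint_sym dB.
have split_swap :
    split_avoids (B j :|: B j') (before B) (after B) (swap_blocks B j).
  have eq_j' : (B j :|: B j') :\: B j = B j'.
    by rewrite setDUl setDv set0U; apply/setDidPl; rewrite disjoint_sym dB.
  have := split_avoids_flip (subsetUl (B j) (B j')) (no123_split_avoids no123).
  by rewrite eq_j' swap_j.
rewrite -swap_blocks_pair -before_swap_blocks -after_swap_blocks in split_swap.
have /andP [c12 c23] := split_avoids_no_cross dB' split_swap pat.
exact: no123 (is123_swap_blocks pat c12 c23).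
Qed.

Lemma swap_blocksE B i : disjoint_blocks B ->
  swap_blocks B i = flip_blocks B @: B (tperm j j' i).
Proof.
move=> dB; have [ip|ip] := boolP (i \in [set j; j']); first exact: swap_blocks_in.
move: (ip); rewrite swap_blocks_out // !inE negb_or => /andP [ij ij'].
rewrite tpermD 1?eq_sym // -[LHS]imset_id; apply: eq_in_imset => x xB.
by rewrite /flip_blocks flip_out // inE negb_or !(disjoint_blocksN dB _ xB).
Qed.

Lemma is_osp_disjoint (b : 'I_k -> nat) B : is_osp b B -> disjoint_blocks B.
Proof.
case/andP=> /andP [/andP [_ dB] _] _ i i' ii'.
by move/forallP: dB => /(_ i) /forallP /(_ i') /implyP; apply.
Qed.

Lemma is_osp_swap_blocks (b : 'I_k -> nat) B :
  is_osp b B -> is_osp (fun i => b (tperm j j' i)) (swap_blocks B).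
Proof.
move=> ospB; have dB := is_osp_disjoint ospB.
have inj_flip : injective (flip_blocks B) := can_inj (flip_blocksK B).
move: ospB => /andP [/andP [/andP [/forallP ne _] /eqP cover] /forallP card_B].
apply/andP; split; first (apply/andP; split; first (apply/andP; split)).
- by apply/forallP => i; rewrite swap_blocksE // imset_eq0 ne.
- apply/forallP => i; apply/forallP => i'; apply/implyP => ii'.
  rewrite !swap_blocksE // -setI_eq0 -imsetI; last by move=> x y _ _; apply: inj_flip.
  by rewrite imset_eq0 setI_eq0 dB // (inj_eq perm_inj).
- apply/eqP/setP => x; rewrite inE; apply/bigcupP.
  have : flip_blocks B x \in \bigcup_(i < k) B i by rewrite cover inE.
  case/bigcupP=> i _ xB; exists (tperm j j' i) => //.
  by rewrite swap_blocksE // tpermK -(flip_blocksK B x) imset_f.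
- by apply/forallP => i; rewrite swap_blocksE // card_imset // card_B.
Qed.

End AdjacentBlocks.

Lemma osp_contains123P k N (B : {ffun 'I_k -> {set 'I_N}}) :
  reflect (has123 B) (osp_contains B p123).
Proof.
apply: (iffP existsP) => [[ix /existsP [e /andP [/andP [mono inB] iso]]]|].
  have lt_ix (a c : 'I_3) : a < c -> ix a < ix c.
    by move/forallP: mono => /(_ a) /forallP /(_ c) /implyP.
  have lt_e (a c : 'I_3) : a < c -> e a < e c.
    by move/forallP: iso => /(_ a) /forallP /(_ c) /eqP ->; rewrite /p123 !perm1.
  pose o1 : 'I_3 := Ordinal (isT : 1 < 3).
  exists (ix ord0), (ix o1), (ix ord_max), (e ord0), (e o1), (e ord_max).
  by split; rewrite ?lt_ix ?lt_e //; apply: (forallP inB).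
move=> [i1 [i2 [i3 [x1 [x2 [x3 [/andP [lt12 lt23] x1B x2B x3B /andP [lt_x12 lt_x23]]]]]]]].
exists [ffun a : 'I_3 => nth i1 [:: i1; i2; i3] a].
apply/existsP; exists [ffun a : 'I_3 => nth x1 [:: x1; x2; x3] a].
apply/andP; split; first (apply/andP; split).
- by apply/forallP => -[[|[|[|a]]] ha]; apply/forallP => -[[|[|[|c]]] hc];
    rewrite !ffunE //=; lia.
- by apply/forallP => -[[|[|[|a]]] ha]; rewrite !ffunE.
- apply/forallP => -[[|[|[|a]]] ha]; apply/forallP => -[[|[|[|c]]] hc];
    rewrite !ffunE /p123 !perm1 //=; apply/eqP; lia.
Qed.

Definition op123 N k (b : 'I_k -> nat) :=
  #|[pred B : {ffun 'I_k -> {set 'I_N}} | is_osp b B && ~~ osp_contains B p123]|.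

Lemma eq_is_osp N k (b b' : 'I_k -> nat) (B : {ffun 'I_k -> {set 'I_N}}) :
  b =1 b' -> is_osp b B = is_osp b' B.
Proof.
by move=> eq_b; rewrite /is_osp; congr (_ && _); apply: eq_forallb => i; rewrite eq_b.
Qed.

Lemma eq_op123 N k (b b' : 'I_k -> nat) : b =1 b' -> op123 N b = op123 N b'.
Proof. by move=> eq_b; apply: eq_card => B; rewrite !inE (eq_is_osp _ eq_b). Qed.

Section AdjacentSwap.

Variables (N k : nat) (j j' : 'I_k).
Hypothesis adjacent : j' = j.+1 :> nat.

Lemma op123_swap_leq (b : 'I_k -> nat) :
  op123 N b <= op123 N (fun i => b (tperm j j' i)).
Proof.
rewrite /op123 -(card_imset _ (can_inj (swap_blocksK adjacent))).
apply/subset_leq_card/subsetP => _ /imsetP [B /andP [ospB avoidB] ->].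
rewrite inE is_osp_swap_blocks //=; apply/osp_contains123P.
apply: (swap_blocks_no123 adjacent (is_osp_disjoint ospB)).
by move/osp_contains123P; apply/negP.
Qed.

Lemma op123_swap (b : 'I_k -> nat) :
  op123 N b = op123 N (fun i => b (tperm j j' i)).
Proof.
have tpermKb : b =1 (fun i => b (tperm j j' (tperm j j' i))).
  by move=> i; rewrite tpermK.
apply/eqP; rewrite eqn_leq op123_swap_leq //=.
by rewrite [X in _ <= X](eq_op123 N tpermKb) op123_swap_leq.
Qed.

End AdjacentSwap.

Lemma op_op123 (bs : seq nat) :
  op bs p123 = op123 (sumn bs) (fun i : 'I_(size bs) => nth 0 bs i).
Proof. by []. Qed.

Lemma op123_cast N k k' (ek : k = k') (b : 'I_k' -> nat) :
  op123 N (fun i : 'I_k => b (cast_ord ek i)) = op123 N b.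
Proof. by subst k'; apply: eq_op123 => i; rewrite cast_ord_id. Qed.

Lemma op_swap (l r : seq nat) x y :
  op (l ++ x :: y :: r) p123 = op (l ++ y :: x :: r) p123.
Proof.
set s1 := l ++ x :: y :: r; set s2 := l ++ y :: x :: r.
have eN : sumn s1 = sumn s2 by rewrite !sumn_cat /=; lia.
have ek : size s1 = size s2 by rewrite !size_cat.
have lt_j : size l < size s1 by rewrite size_cat /=; lia.
have lt_j' : (size l).+1 < size s1 by rewrite size_cat /=; lia.
rewrite !op_op123 -(op123_cast _ ek).
rewrite (@op123_swap _ _ (Ordinal lt_j) (Ordinal lt_j')) // eN.
apply: eq_op123 => i; rewrite /= /s1 /s2 !nth_cat.
case: tpermP => [->|->|]; rewrite /= ?ltnn ?subnn ?ltnNge ?leqnSn ?subSnn //.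
move=> /eqP + /eqP; rewrite -!(inj_eq val_inj) /= => ne_j ne_j'.
case: leqP => //= le_li.
by case: (i - size l) (subnK le_li) => [|[|m]] //= eq_i;
  move: ne_j ne_j'; rewrite -eq_i; lia.
Qed.

Section PermAdjacentSwaps.

Variables (T : eqType) (R : Type) (f : seq T -> R).
Hypothesis f_swap : forall l r x y, f (l ++ x :: y :: r) = f (l ++ y :: x :: r).

Lemma swap_across l s x r : f (l ++ x :: s ++ r) = f (l ++ s ++ x :: r).
Proof.
elim: s l => [|y s IHs] l //=.
by rewrite f_swap; have := IHs (rcons l y); rewrite -cats1 -!catA.
Qed.

Lemma perm_eq_swap_invariant_cat l s t : perm_eq s t -> f (l ++ s) = f (l ++ t).
Proof.
elim: s t l => [|x s IHs] t l; first by move/perm_size; case: t.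
move=> pst; have xt : x \in t by rewrite -(perm_mem pst) mem_head.
case/splitPr: xt pst => t1 t2 pst.
rewrite -swap_across; have := IHs (t1 ++ t2) (rcons l x); rewrite -cats1 -!catA /=.
apply; rewrite -(perm_cons x) (perm_trans pst) //.
by rewrite -[x :: t2]cat1s perm_catCA.
Qed.

Lemma perm_eq_swap_invariant s t : perm_eq s t -> f s = f t.
Proof. exact: perm_eq_swap_invariant_cat [::] s t. Qed.

End PermAdjacentSwaps.

Theorem lemma1 (bs cs : seq nat) :
  all (fun x => 0 < x) bs -> perm_eq bs cs ->
  op bs p123 = op cs p123.
Proof.
by move=> _; apply: (perm_eq_swap_invariant (f := fun s => op s p123) op_swap).
Qed.
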